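(* Let $\alpha\in(0,1)$. If a deterministic algorithm for SSP is $(1+\alpha)$-consistent, then its robustness (on instances with $m$ machines) is at least $1+\frac{1-\alpha}{2\alpha}-O(\frac1m)$, where the $O(\cdot)$ hides a factor depending only on $\alpha$; this holds even when all jobs have equal processing times. In the special case of infinitesimal jobs, the robustness of a deterministic $(1+\alpha)$-consistent algorithm is at least $1+\frac{(1-\alpha)^2}{4\alpha}-O(\frac1m)$.
   Context: Scheduling with Speed Predictions (SSP). An instance consists of $n$ jobs with processing times $p_1,\dots,p_n\ge 0$ and $m$ machines with true speeds $s_1,\dots,s_m>0$; processing job $j$ on machine $i$ takes time $p_j/s_i$. For a bag (set of jobs) $B$, $p(B)=\sum_{j\in B}p_j$. In the partitioning stage the algorithm receives $\mathbf p$ and predicted speeds $\hat{\mathbf s}\ge 0$ (not $\mathbf s$) and partitions the jobs into $m$ possibly empty bags. In the scheduling stage $\mathbf s$ is revealed and each bag is assigned whole to a machine; the makespan is the maximum over machines $i$ of (total processing time assigned to $i$)$/s_i$. $opt(\mathbf p,\mathbf s)$ is the minimum makespan of assigning individual jobs knowing $\mathbf s$; $alg(\mathbf p,\hat{\mathbf s},\mathbf s)$ is the algorithm's makespan. An algorithm is $c$-consistent if $alg(\mathbf p,\mathbf s,\mathbf s)\le c\cdot opt(\mathbf p,\mathbf s)$ for all $\mathbf p,\mathbf s$; its robustness is $\sup_{\mathbf p,\hat{\mathbf s},\mathbf s} alg(\mathbf p,\hat{\mathbf s},\mathbf s)/opt(\mathbf p,\mathbf s)$. In the infinitesimal-jobs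 case, jobs are infinitesimally small, so the total load can be divided in the partitioning stage into $m$ bags of arbitrary (real, nonnegative) total processing times summing to the total load. *)

From HB Require Import structures.
From mathcomp Require Import all_boot all_order all_algebra.
Set Implicit Arguments. Unset Strict Implicit. Unset Printing Implicit Defensive.
Import Order.TTheory GRing.Theory Num.Theory.
Local Open Scope ring_scope.

Section SSP.
Variable R : realFieldType.

(* Jobs are 'I_n, machines are 'I_m.  Processing times p : 'I_n -> R,
   speeds s : 'I_m -> R.  An assignment of jobs to machines f : 'I_n -> 'I_m. *)

Definition load (n m : nat) (p : 'I_n -> R) (f : 'I_n -> 'I_m) (i : 'I_m) : R :=
  \sum_(j < n | f j == i) p j.

Definition makespan (n m : nat) (p : 'I_n -> R) (s : 'I_m -> R)
    (f : 'I_n -> 'I_m) : R :=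
  \big[Num.max/0]_(i < m) (load p f i / s i).

(* opt(p,s): minimum makespan over all assignments of individual jobs.
   (The minimum over the finite, nonempty when m > 0, list of all assignments.) *)
Definition opt (n m : nat) (p : 'I_n -> R) (s : 'I_m -> R) : R :=
  let l := [seq makespan p s (fun j => f j) | f : {ffun 'I_n -> 'I_m} <- enum {ffun 'I_n -> 'I_m}] in
  \big[Num.min/head 0 l]_(x <- l) x.

(* A deterministic algorithm for SSP on m machines (for any number n of jobs):
   - partitioning stage: from p and predicted speeds sh, put each job j into
     bag (part p sh j) : 'I_m (m possibly empty bags);
   - scheduling stage: from p, sh and the revealed true speeds s, assign each
     bag (whole) to a machine (sched p sh s b). *)
Record algo (m : nat) := Algo {
  part  : forall n, ('I_n -> R) -> ('I_m -> R) -> 'I_n -> 'I_m ;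
  sched : forall n, ('I_n -> R) -> ('I_m -> R) -> ('I_m -> R) -> 'I_m -> 'I_m
}.

Definition alg (m : nat) (A : algo m) (n : nat) (p : 'I_n -> R)
    (sh s : 'I_m -> R) : R :=
  makespan p s (fun j => sched A p sh s (part A p sh j)).

Definition consistent (m : nat) (A : algo m) (c : R) : Prop :=
  forall n (p : 'I_n -> R) (s : 'I_m -> R),
    (forall j, 0 <= p j) -> (forall i, 0 < s i) ->
    alg A p s s <= c * opt p s.

Definition robust_bound_equal_jobs (m : nat) (A : algo m) (r : R) : Prop :=
  forall n (c : R) (sh s : 'I_m -> R),
    0 <= c -> (forall i, 0 <= sh i) -> (forall i, 0 < s i) ->
    alg A (fun _ : 'I_n => c) sh s <= r * opt (fun _ : 'I_n => c) s.

(* The total load L is split into m bags of real sizes (ipart L sh i), and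
   the bags are then assigned to machines (isched L sh s b). *)
Record ialgo (m : nat) := IAlgo {
  ipart  : R -> ('I_m -> R) -> 'I_m -> R ;
  isched : R -> ('I_m -> R) -> ('I_m -> R) -> 'I_m -> 'I_m
}.

Definition ivalid (m : nat) (A : ialgo m) : Prop :=
  forall (L : R) (sh : 'I_m -> R), 0 <= L -> (forall i, 0 <= sh i) ->
    (forall b, 0 <= ipart A L sh b) /\ \sum_(b < m) ipart A L sh b = L.

Definition ialg (m : nat) (A : ialgo m) (L : R) (sh s : 'I_m -> R) : R :=
  \big[Num.max/0]_(i < m)
     ((\sum_(b < m | isched A L sh s b == i) ipart A L sh b) / s i).

Definition iopt (m : nat) (L : R) (s : 'I_m -> R) : R := L / \sum_(i < m) s i.

Definition iconsistent (m : nat) (A : ialgo m) (c : R) : Prop :=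
  forall (L : R) (s : 'I_m -> R), 0 <= L -> (forall i, 0 < s i) ->
    ialg A L s s <= c * iopt L s.

Definition irobust_bound (m : nat) (A : ialgo m) (r : R) : Prop :=
  forall (L : R) (sh s : 'I_m -> R),
    0 <= L -> (forall i, 0 <= sh i) -> (forall i, 0 < s i) ->
    ialg A L sh s <= r * iopt L s.

End SSP.

(* Predict one machine of speed m - 1 and m - 1 machines of speed 1, and give
   the jobs total size 2(m - 1), so that the predicted optimum is 1.
   Consistency keeps at most (1 + alpha)(m - 1) of the load on the fast
   machine, while each slow machine takes load at most u, with u = 1 for unit
   jobs (a single job) and u = 1 + alpha for infinitesimal jobs.  So at least
   (1 - alpha)(m - 1) / u bags go to slow machines; the other bags, at most
   about alpha m of them, carry the remaining load, and some bag has size at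
   least (1 + alpha)(m - 1) / (1 + alpha (m - 1)), resp.
   (1 + alpha)^2 (m - 1) / (2 alpha m + 1 - alpha).  If all true speeds are 1,
   that bag bounds the makespan from below, whereas opt <= 2, resp.
   iopt = 2(m - 1) / m. *)

From HB Require Import structures.
From mathcomp Require Import all_boot all_order all_algebra.
From mathcomp Require Import reals ring lra.

Set Implicit Arguments.
Unset Strict Implicit.
Unset Printing Implicit Defensive.

Import Order.TTheory GRing.Theory Num.Theory.
Local Open Scope ring_scope.

Section Schedules.
Variable R : realFieldType.

Lemma ler_sum_term (I : finType) (P : pred I) (F : I -> R) j :
  (forall i, 0 <= F i) -> P j -> F j <= \sum_(i | P i) F i.
Proof.
by move=> F0 Pj; rewrite (bigD1 j) //= lerDl sumr_ge0.
Qed.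

Lemma sum_preimage_inj_le1 (I J : finType) (g : I -> J) j :
  injective g -> \sum_(i | g i == j) (1 : R) <= 1.
Proof.
move=> g_inj; case: (pickP [pred i | g i == j]) => [i0 /eqP gi0 | none].
  rewrite (eq_bigl (pred1 i0)) ?big_pred1_eq // => i.
  by rewrite /= -gi0 (inj_eq g_inj).
by rewrite big_pred0 ?ler01.
Qed.

Lemma split_lshift m n (k : 'I_m) : split (lshift n k) = inl k.
Proof. exact: (unsplitK (inl k)). Qed.

Lemma split_rshift m n (k : 'I_n) : split (rshift m k) = inr k.
Proof. exact: (unsplitK (inr k)). Qed.

Definition bag_makespan m (be : 'I_m -> R) (T : 'I_m -> 'I_m) (s : 'I_m -> R) : R :=
  \big[Num.max/0]_(i < m) ((\sum_(b | T b == i) be b) / s i).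

Lemma le_bag_makespan m (be : 'I_m -> R) (T : 'I_m -> 'I_m) (s : 'I_m -> R) i :
  (\sum_(b | T b == i) be b) / s i <= bag_makespan be T s.
Proof. exact: le_bigmax. Qed.

Lemma bag_le_bag_makespan m (be : 'I_m -> R) (T : 'I_m -> 'I_m) b :
  (forall b, 0 <= be b) -> be b <= bag_makespan be T (fun=> 1).
Proof.
move=> be0; apply: le_trans (le_bag_makespan _ _ _ (T b)).
by rewrite divr1 ler_sum_term.
Qed.

Lemma load_comp n m (p : 'I_n -> R) (P : 'I_n -> 'I_m) (T : 'I_m -> 'I_m) i :
  load p (fun j => T (P j)) i = \sum_(b | T b == i) load p P b.
Proof.
rewrite /load (partition_big P (fun b => T b == i)) //=.
apply: eq_bigr => b /eqP <-; apply: eq_bigl => j.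
by case: (P j =P b) => [->|]; rewrite ?eqxx ?andbF.
Qed.

Lemma alg_bag_makespan m (A : algo R m) n (p : 'I_n -> R) (sh s : 'I_m -> R) :
  alg A p sh s = bag_makespan (load p (part A p sh)) (sched A p sh s) s.
Proof. by apply: eq_bigr => i _; rewrite load_comp. Qed.

Lemma ialg_bag_makespan m (A : ialgo R m) (L : R) (sh s : 'I_m -> R) :
  ialg A L sh s = bag_makespan (ipart A L sh) (isched A L sh s) s.
Proof. by []. Qed.

Lemma sum_load n m (p : 'I_n -> R) (f : 'I_n -> 'I_m) :
  \sum_i load p f i = \sum_j p j.
Proof. by rewrite (partition_big f xpredT). Qed.

Lemma load_ge0 n m (p : 'I_n -> R) (f : 'I_n -> 'I_m) i :
  (forall j, 0 <= p j) -> 0 <= load p f i.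
Proof. by move=> p0; apply: sumr_ge0. Qed.

Lemma load_unit n m (f : 'I_n -> 'I_m) i :
  load (fun=> 1) f i = #|[pred j | f j == i]|%:R :> R.
Proof. exact: sumr_const. Qed.

Lemma makespan_ge0 n m (p : 'I_n -> R) (s : 'I_m -> R) f : 0 <= makespan p s f.
Proof. exact: bigmax_ge_id. Qed.

Lemma makespan_le n m (p : 'I_n -> R) (s : 'I_m -> R) f c :
  0 <= c -> (forall i, load p f i <= c * s i) -> (forall i, 0 < s i) ->
  makespan p s f <= c.
Proof.
by move=> c0 lf s0; apply: bigmax_le => // i _; rewrite ler_pdivrMr.
Qed.

Lemma opt_le_makespan n m (p : 'I_n -> R) (s : 'I_m -> R) f :
  opt p s <= makespan p s f.
Proof.
have -> : makespan p s f = makespan p s (fun j => [ffun j => f j] j).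
  by apply: eq_bigr => i _; congr (_ / _); apply: eq_bigl => j; rewrite ffunE.
by apply: ge_bigmin_seq => //; apply: map_f; rewrite mem_enum.
Qed.

Lemma opt_ge0 n m (p : 'I_n -> R) (s : 'I_m -> R) : 0 <= opt p s.
Proof.
rewrite /opt; set l := map _ _.
have l0 x : x \in l -> 0 <= x by case/mapP => f _ ->; apply: makespan_ge0.
rewrite big_seq; apply: le_bigmin => //.
by case: l l0 => //= x l l0; rewrite l0 ?mem_head.
Qed.

Lemma sum_bags_fast_slow m (be : 'I_m -> R) (T : 'I_m -> 'I_m) i0 (w u M : R) :
  (forall b, 0 <= be b) -> (forall b, be b <= M) ->
  \sum_(b | T b == i0) be b <= w ->
  (forall i, i != i0 -> \sum_(b | T b == i) be b <= u) ->
  exists J K : R, [/\ 0 <= J, 0 <= K, J + K = m%:R,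
    \sum_b be b <= w + K * u & \sum_b be b <= J * M + K * u].
Proof.
move=> be0 beM fast slow.
exists #|[pred b | T b == i0]|%:R, #|[pred b | T b != i0]|%:R.
have slow_bags : \sum_(b | T b != i0) be b <= #|[pred b | T b != i0]|%:R * u.
  rewrite mulr_natl -sumr_const; apply: ler_sum => b /slow.
  by apply: le_trans; apply: ler_sum_term.
have fast_bags : \sum_(b | T b == i0) be b <= #|[pred b | T b == i0]|%:R * M.
  by rewrite mulr_natl -sumr_const; apply: ler_sum.
rewrite (bigID (fun b => T b == i0)) /= -natrD cardC card_ord.
by split; rewrite ?ler0n ?lerD.
Qed.

Lemma bag_lower_bound (x S w u M J K : R) :
  0 < u -> 0 <= J -> 0 <= K -> J + K = x -> x * u < S ->
  S <= w + K * u -> S <= J * M + K * u ->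
  u * w <= M * (x * u - S + w).
Proof.
move=> u0 J0 K0 JK xuS fast all.
have J_pos : 0 < J.
  rewrite lt0r J0 andbT; apply/eqP => J_0.
  move: xuS all; rewrite -JK J_0 !(mul0r, add0r); lra.
have M_gt_u : u < M.
  have Ku : K * u = x * u - J * u by rewrite -JK; ring.
  have : 0 < J * (M - u) by lra.
  by rewrite pmulr_rgt0 // subr_gt0.
have h1 : 0 <= (w - (S - K * u)) * (M - u) by apply: mulr_ge0; lra.
have h2 : 0 <= u * (J * M + K * u - S) by apply: mulr_ge0; lra.
rewrite -JK in h1 h2 *; nra.
Qed.
End Schedules.

Section FastSlow.
Variables (R : realFieldType) (y : nat).

Definition fast_slow_speeds : 'I_y.+1 -> R :=
  fun i => if i == ord0 then y%:R else 1.

Lemma fast_slow_speeds_gt0 i : (0 < y)%N -> 0 < fast_slow_speeds i.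
Proof. by move=> y0; rewrite /fast_slow_speeds; case: ifP; rewrite ?ltr0n. Qed.

Lemma sum_fast_slow_speeds : \sum_i fast_slow_speeds i = 2 * y%:R.
Proof.
rewrite big_ord_recl /fast_slow_speeds eqxx /= sumr_const card_ord.
by rewrite mulrDl mul1r.
Qed.

Let unit_jobs : 'I_(y + y) -> R := fun=> 1.

Lemma opt_fast_slow_le1 : (0 < y)%N -> opt unit_jobs fast_slow_speeds <= 1.
Proof.
move=> y0; pose f (j : 'I_(y + y)) : 'I_y.+1 :=
  if split j is inr k then lift ord0 k else ord0.
apply: le_trans (opt_le_makespan _ _ f) _.
apply: makespan_le => // [i|i]; last exact: fast_slow_speeds_gt0.
rewrite /load big_split_ord /= /f; under eq_bigl => k do rewrite split_lshift.
under [X in _ + X]eq_bigl => k do rewrite split_rshift.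
rewrite mul1r /fast_slow_speeds; case: ifP => [/eqP ->|i0].
  rewrite [X in _ + X]big_pred0 => [|k]; last by rewrite eq_sym (negbTE (neq_lift _ _)).
  by rewrite addr0 sumr_const card_ord.
rewrite big_pred0 => [|k]; last by rewrite eq_sym i0.
by rewrite add0r sum_preimage_inj_le1 //; apply: lift_inj.
Qed.

Lemma opt_unit_speeds_le2 : opt unit_jobs (fun _ : 'I_y.+1 => 1) <= 2.
Proof.
pose f (j : 'I_(y + y)) : 'I_y.+1 :=
  match split j with inl k | inr k => lift ord0 k end.
apply: le_trans (opt_le_makespan _ _ f) _.
apply: makespan_le => // i.
rewrite /load big_split_ord /= /f; under eq_bigl => k do rewrite split_lshift.
under [X in _ + X]eq_bigl => k do rewrite split_rshift.
by rewrite mulr1 lerD // sum_preimage_inj_le1 //; apply: lift_inj.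
Qed.
End FastSlow.

Lemma equal_jobs_fast_slow (R : realFieldType) (a r : R) y (A : algo R y.+1) :
  0 < a < 1 -> (1 < y)%N -> 0 <= r ->
  consistent A (1 + a) -> robust_bound_equal_jobs A r ->
  (1 + a) * y%:R <= 2 * r * (1 + a * y%:R).
Proof.
move=> /andP [a0 a1] y1 r0 HC HR; have y0 : (0 < y)%N by apply: ltnW.
pose p := fun _ : 'I_(y + y) => (1 : R); pose sh := @fast_slow_speeds R y.
have p0 j : 0 <= p j by apply: ler01.
have sh_gt0 i : 0 < sh i by apply: fast_slow_speeds_gt0.
pose be := load p (part A p sh); pose Tc := sched A p sh sh.
have be0 b : 0 <= be b by apply: load_ge0.
have Sbe : \sum_b be b = 2 * y%:R.
  by rewrite sum_load sumr_const card_ord natrD mulrDl mul1r.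
have cons_machine i : (\sum_(b | Tc b == i) be b) / sh i <= 1 + a.
  apply: le_trans (le_bag_makespan _ _ _ i) _; rewrite -alg_bag_makespan.
  apply: le_trans (HC _ p sh p0 sh_gt0) _; rewrite -[leRHS]mulr1 ler_wpM2l //.
    by rewrite addr_ge0 ?ltW.
  exact: opt_fast_slow_le1.
have fast : \sum_(b | Tc b == ord0) be b <= (1 + a) * y%:R.
  by have := cons_machine ord0; rewrite /sh /fast_slow_speeds eqxx ler_pdivrMr ?ltr0n.
have slow i : i != ord0 -> \sum_(b | Tc b == i) be b <= 1.
  move=> i0; have := cons_machine i.
  rewrite /sh /fast_slow_speeds (negbTE i0) divr1 -load_comp load_unit => h.
  (* the load is a number of unit jobs below 1 + a < 2 *)
  by rewrite -[1]/(1%:R) ler_nat -ltnS -(ltr_nat R); lra.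
have bagM b : be b <= 2 * r.
  apply: le_trans (bag_le_bag_makespan (sched A p sh (fun=> 1)) b be0) _.
  rewrite -alg_bag_makespan.
  apply: le_trans (HR _ 1 sh _ ler01 (fun i => ltW (sh_gt0 i)) (fun=> ltr01)) _.
  by rewrite mulrC ler_wpM2r //; apply: opt_unit_speeds_le2.
have [J [K [J0 K0 JK fast_all bags_all]]] := sum_bags_fast_slow be0 bagM fast slow.
rewrite Sbe in fast_all bags_all.
have := bag_lower_bound ltr01 J0 K0 JK _ fast_all bags_all.
rewrite -natr1 mul1r.
have -> : (y%:R + 1) * 1 - 2 * y%:R + (1 + a) * y%:R = 1 + a * y%:R :> R by ring.
apply; rewrite mulr1.
have y2 : 2 <= y%:R :> R by rewrite (ler_nat R 2).
lra.
Qed.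

Lemma infinitesimal_fast_slow (R : realFieldType) (a r : R) y (A : ialgo R y.+1) :
  0 < a -> 0 <= r -> ivalid A -> iconsistent A (1 + a) -> irobust_bound A r ->
  (1 + a) * y.+1%:R < 2 * y%:R ->
  (1 + a) ^+ 2 * y.+1%:R <= 2 * r * (2 * a * y.+1%:R + 1 - a).
Proof.
move=> a0 r0 HV HC HR xy.
have y0 : 0 < y%:R :> R.
  rewrite ltr0n lt0n; apply: contraTneq xy => ->.
  by rewrite mulr0 -leNgt mulr1 addr_ge0 ?ltW.
have x0 : 0 < y.+1%:R :> R by rewrite ltr0n.
pose L : R := 2 * y%:R; pose sh := @fast_slow_speeds R y.
have L_gt0 : 0 < L by rewrite mulr_gt0.
have L0 : 0 <= L by apply: ltW.
have sh_gt0 i : 0 < sh i by apply: fast_slow_speeds_gt0; rewrite -(ltr0n R).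
have sh_ge0 i : 0 <= sh i by apply: ltW.
pose be := ipart A L sh; pose Tc := isched A L sh sh.
have [be0 Sbe] := HV L sh L0 sh_ge0.
have cons_machine i : (\sum_(b | Tc b == i) be b) / sh i <= 1 + a.
  apply: le_trans (le_bag_makespan _ _ _ i) _; rewrite -ialg_bag_makespan.
  apply: le_trans (HC L sh L0 sh_gt0) _.
  by rewrite /iopt sum_fast_slow_speeds -/L divff ?mulr1 // lt0r_neq0.
have fast : \sum_(b | Tc b == ord0) be b <= (1 + a) * y%:R.
  by have := cons_machine ord0; rewrite /sh /fast_slow_speeds eqxx ler_pdivrMr.
have slow i : i != ord0 -> \sum_(b | Tc b == i) be b <= 1 + a.
  by move=> i0; have := cons_machine i; rewrite /sh /fast_slow_speeds (negbTE i0) divr1.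
have bagM b : be b <= r * (L / y.+1%:R).
  apply: le_trans (bag_le_bag_makespan (isched A L sh (fun=> 1)) b be0) _.
  rewrite -ialg_bag_makespan.
  apply: le_trans (HR L sh (fun=> 1) L0 sh_ge0 (fun=> ltr01)) _.
  by rewrite /iopt sumr_const card_ord.
have [J [K [J0 K0 JK fast_all bags_all]]] := sum_bags_fast_slow be0 bagM fast slow.
rewrite Sbe in fast_all bags_all.
have xuL : y.+1%:R * (1 + a) < L by rewrite mulrC.
have := bag_lower_bound (addr_gt0 ltr01 a0) J0 K0 JK xuL fast_all bags_all.
have -> : y.+1%:R * (1 + a) - L + (1 + a) * y%:R = 2 * a * y.+1%:R + 1 - a.
  by rewrite /L -natr1; ring.
set E := 2 * a * y.+1%:R + 1 - a => bound.
have key : (1 + a) ^+ 2 * y.+1%:R * y%:R <= 2 * r * E * y%:R.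
  have -> : 2 * r * E * y%:R = y.+1%:R * (r * (L / y.+1%:R) * E).
    by rewrite /L; field; rewrite nat1r pnatr_eq0.
  have -> : (1 + a) ^+ 2 * y.+1%:R * y%:R = y.+1%:R * ((1 + a) * ((1 + a) * y%:R)).
    by ring.
  by rewrite ler_pM2l.
by rewrite ler_pM2r in key.
Qed.

Section Bounds.
Variable R : realFieldType.
Implicit Types a x r : R.

(* For small x the claimed bound is nonpositive; otherwise it is the bound
   given by the instance minus a deficit of order 1 / (a^2 x). *)
Lemma equal_jobs_bound a x r : 0 < a < 1 -> 0 < x -> 0 <= r ->
  (2 < x -> (1 + a) * (x - 1) <= 2 * r * (1 + a * (x - 1))) ->
  1 + (1 - a) / (2 * a) - 2 / a ^+ 2 / x <= r.
Proof.
move=> /andP [a0 a1] x0 r0 large.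
have a2 : 0 < a ^+ 2 by rewrite exprn_gt0.
case: (lerP x 2) => [x2 | /large bound].
  have -> : 1 + (1 - a) / (2 * a) - 2 / a ^+ 2 / x =
      ((1 + a) * a * x - 4) / (2 * a ^+ 2 * x).
    by field; rewrite !lt0r_neq0.
  apply: le_trans r0; rewrite ler_pdivrMr ?mul0r ?mulr_gt0 //; nra.
pose E := 1 + a * (x - 1); have E0 : 0 < E by rewrite /E; nra.
have -> : 1 + (1 - a) / (2 * a) - 2 / a ^+ 2 / x =
    (1 + a) * (x - 1) / (2 * E) + ((1 + a) * a * x - 4 * E) / (2 * a ^+ 2 * x * E).
  by rewrite /E; field; rewrite -/E !lt0r_neq0.
rewrite -[r]addr0; apply: lerD.
  by rewrite ler_pdivrMr ?mulr_gt0 // mulrCA mulrA.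
have ax : 0 < a * x by apply: mulr_gt0.
by rewrite ler_pdivrMr ?mul0r ?mulr_gt0 // /E; nra.
Qed.

Lemma infinitesimal_bound a x r : 0 < a < 1 -> 0 < x -> 0 <= r ->
  (2 < x * (1 - a) -> (1 + a) ^+ 2 * x <= 2 * r * (2 * a * x + 1 - a)) ->
  1 + (1 - a) ^+ 2 / (4 * a) - 2 / (a ^+ 2 * (1 - a)) / x <= r.
Proof.
move=> /andP [a0 a1] x0 r0 large.
have a2 : 0 < a ^+ 2 by rewrite exprn_gt0.
have a'0 : 0 < 1 - a by rewrite subr_gt0.
case: (lerP (x * (1 - a)) 2) => [x2 | /large bound].
  have -> : 1 + (1 - a) ^+ 2 / (4 * a) - 2 / (a ^+ 2 * (1 - a)) / x =
      ((1 + a) ^+ 2 * a * (1 - a) * x - 8) / (4 * a ^+ 2 * (1 - a) * x).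
    by field; rewrite !lt0r_neq0.
  have h1 : (1 + a) ^+ 2 * a <= 4 by nra.
  have h2 : (1 + a) ^+ 2 * a * (x * (1 - a)) <= 4 * 2.
    by apply: ler_pM => //; nra.
  apply: le_trans r0; rewrite ler_pdivrMr ?mul0r ?mulr_gt0 //; nra.
pose E := 2 * a * x + 1 - a; have E0 : 0 < E by rewrite /E; nra.
have -> : 1 + (1 - a) ^+ 2 / (4 * a) - 2 / (a ^+ 2 * (1 - a)) / x =
    (1 + a) ^+ 2 * x / (2 * E) +
    ((1 + a) ^+ 2 * (1 - a) ^+ 2 * a * x - 8 * E) / (4 * a ^+ 2 * (1 - a) * x * E).
  by rewrite /E; field; rewrite -/E !lt0r_neq0.
rewrite -[r]addr0; apply: lerD.
  by rewrite ler_pdivrMr ?mulr_gt0 // mulrCA mulrA.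
have ax : 0 < a * x by apply: mulr_gt0.
have h1 : (1 + a) ^+ 2 * (1 - a) ^+ 2 <= 1.
  by rewrite -exprMn; apply: exprn_ile1; nra.
have h2 : (1 + a) ^+ 2 * (1 - a) ^+ 2 * (a * x) <= a * x.
  by apply: ler_piMl => //; apply: ltW.
by rewrite ler_pdivrMr ?mul0r ?mulr_gt0 // /E; nra.
Qed.
End Bounds.

Lemma robust_bound_equal_jobs_ge0 (R : realFieldType) m (A : algo R m) r :
  robust_bound_equal_jobs A r -> 0 <= r.
Proof.
move=> HR; pose one := fun _ : 'I_m => (1 : R); pose p := fun _ : 'I_1 => (1 : R).
have := HR 1%N 1 one one ler01 (fun=> ler01) (fun=> ltr01).
have alg1 : 1 <= alg A p one one.
  have p0 j : 0 <= p j by apply: ler01.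
  rewrite alg_bag_makespan.
  apply: le_trans (bag_le_bag_makespan _ (part A p one ord0) _) => //.
    exact: (ler_sum_term (F := p)).
  by move=> b; apply: load_ge0.
have := opt_ge0 p one; nra.
Qed.

Lemma irobust_bound_ge1 (R : realFieldType) m (A : ialgo R m) r :
  (0 < m)%N -> ivalid A -> irobust_bound A r -> 1 <= r.
Proof.
move=> m0 HV HR; pose one := fun _ : 'I_m => (1 : R).
have [be0 Sbe] := HV 1 one ler01 (fun=> ler01).
have bag b : ipart A 1 one b <= r / m%:R.
  apply: le_trans (bag_le_bag_makespan (isched A 1 one one) b be0) _.
  rewrite -ialg_bag_makespan.
  apply: le_trans (HR 1 one one ler01 (fun=> ler01) (fun=> ltr01)) _.
  by rewrite /iopt sumr_const card_ord mul1r.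
rewrite -Sbe; apply: le_trans (ler_sum _ (fun b _ => bag b)) _.
by rewrite sumr_const card_ord -[_ *+ m]mulr_natl mulrCA divff ?mulr1 // pnatr_eq0 -lt0n.
Qed.

Theorem theorem1 (R : realType) (alpha : R) :
  0 < alpha < 1 ->
  (exists C : R, forall (m : nat) (A : algo R m), (0 < m)%N ->
     consistent A (1 + alpha) ->
     forall r : R, robust_bound_equal_jobs A r ->
       1 + (1 - alpha) / (2 * alpha) - C / m%:R <= r)
  /\
  (exists C : R, forall (m : nat) (A : ialgo R m), (0 < m)%N ->
     ivalid A -> iconsistent A (1 + alpha) ->
     forall r : R, irobust_bound A r ->
       1 + (1 - alpha) ^+ 2 / (4 * alpha) - C / m%:R <= r).
Proof.
move=> a01; have /andP [a0 _] := a01.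
split; [exists (2 / alpha ^+ 2) | exists (2 / (alpha ^+ 2 * (1 - alpha)))].
  case=> [//|y] A _ HC r HR; have r0 := robust_bound_equal_jobs_ge0 HR.
  apply: equal_jobs_bound; rewrite ?ltr0n // -[y.+1%:R]natr1 addrK => y2.
  by apply: (equal_jobs_fast_slow a01 _ r0 HC HR); rewrite -(ltr_nat R 1); lra.
case=> [//|y] A _ HV HC r HR.
have r0 := le_trans ler01 (irobust_bound_ge1 (ltn0Sn y) HV HR).
apply: infinitesimal_bound; rewrite ?ltr0n // => large.
by apply: (infinitesimal_fast_slow a0 r0 HV HC HR); rewrite mulrC; lra.
Qed.
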